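(* Let $0<R\le\infty$ and let $\varphi$ be a quasiconcave function on $[0,R)$. Then: (i) $S_\varphi$ is bounded from $M_\varphi(0,R)$ to $M_\varphi(0,R)$ if and only if $\varphi$ satisfies the $B$-condition; (ii) $S_\varphi$ is bounded from $L^\infty(0,R)$ to $L^\infty(0,R)$ for every quasiconcave $\varphi$.
   Context: For a measurable a.e. finite function $f$ on $(0,R)$, $f^*$ is its non-increasing rearrangement, $f^*(t)=\inf\{\lambda>0: |\{x:|f(x)|>\lambda\}|\le t\}$, and $f^{**}(t)=\frac1t\int_0^t f^*(s)\,ds$. A function $\varphi\colon[0,R)\to[0,\infty)$ is quasiconcave if $\varphi(t)=0$ iff $t=0$, $\varphi$ is non-decreasing, and $\varphi(t)/t$ is non-increasing on $(0,R)$. It satisfies the $B$-condition if there is $C>0$ with $\frac1t\int_0^t \frac{ds}{\varphi(s)}\le \frac{C}{\varphi(t)}$ for all $t\in(0,R)$. $S_\varphi f(t)=\frac{1}{\varphi(t)}\sup_{0<s<t}\varphi(s)f^*(s)$, $t\in(0,R)$. $M_\varphi(0,R)$ is the set of $f$ with $\|f\|_{M_\varphi}=\sup_{0<s<R}\varphi(s)f^{**}(s)<\infty$. *)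

From HB Require Import structures.
From mathcomp Require Import all_boot all_order all_algebra.
From mathcomp Require Import all_classical all_reals all_analysis.
From mathcomp Require Import measurable_realfun ess_sup_inf.
Set Implicit Arguments. Unset Strict Implicit. Unset Printing Implicit Defensive.
Import Order.TTheory GRing.Theory Num.Theory.
Import numFieldNormedType.Exports.
Local Open Scope classical_set_scope.
Local Open Scope ring_scope.

Definition Ioo0 {R : realType} (Rb : \bar R) : set R :=
  [set x | 0 < x /\ (x%:E < Rb)%E].

Definition distrib {R : realType} (Rb : \bar R) (f : R -> \bar R) (lam : R) : \bar R :=
  (@lebesgue_measure R) (Ioo0 Rb `&` [set x | (lam%:E < `|f x|)%E]).

Definition rearr {R : realType} (Rb : \bar R) (f : R -> \bar R) (t : R) : \bar R :=
  ereal_inf [set lam%:E | lam in [set lam : R | 0 < lam /\ (distrib Rb f lam <= t%:E)%E]].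

Definition rearr2 {R : realType} (Rb : \bar R) (f : R -> \bar R) (t : R) : \bar R :=
  ((t^-1)%:E * \int[@lebesgue_measure R]_(s in (`]0%R, t[ : set R)) rearr Rb f s)%E.

Definition ae_finite {R : realType} (Rb : \bar R) (f : R -> \bar R) : Prop :=
  {ae @lebesgue_measure R, forall x, Ioo0 Rb x -> f x \is a fin_num}.

Definition quasiconcave {R : realType} (Rb : \bar R) (phi : R -> R) : Prop :=
  [/\ (forall t, 0 <= t -> (t%:E < Rb)%E -> 0 <= phi t),
      (forall t, 0 <= t -> (t%:E < Rb)%E -> (phi t = 0 <-> t = 0)),
      (forall s t, 0 <= s -> s <= t -> (t%:E < Rb)%E -> phi s <= phi t) &
      (forall s t, 0 < s -> s <= t -> (t%:E < Rb)%E -> phi t / t <= phi s / s)].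

Definition B_condition {R : realType} (Rb : \bar R) (phi : R -> R) : Prop :=
  exists C : R, 0 < C /\
    forall t, Ioo0 Rb t ->
      ((t^-1)%:E * \int[@lebesgue_measure R]_(s in (`]0%R, t[ : set R)) ((phi s)^-1)%:E
        <= (C / phi t)%:E)%E.

Definition S_op {R : realType} (Rb : \bar R) (phi : R -> R) (f : R -> \bar R)
  (t : R) : \bar R :=
  (((phi t)^-1)%:E *
     ereal_sup [set ((phi s)%:E * rearr Rb f s)%E | s in (`]0%R, t[ : set R)])%E.

Definition M_norm {R : realType} (Rb : \bar R) (phi : R -> R) (f : R -> \bar R) : \bar R :=
  ereal_sup [set ((phi s)%:E * rearr2 Rb f s)%E | s in Ioo0 Rb].

Definition in_M {R : realType} (Rb : \bar R) (phi : R -> R) (f : R -> \bar R) : Prop :=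
  [/\ measurable_fun (Ioo0 Rb) f, ae_finite Rb f & (M_norm Rb phi f < +oo)%E].

Definition Linf_norm {R : realType} (Rb : \bar R) (f : R -> \bar R) : \bar R :=
  ess_sup (@lebesgue_measure R)
    (fun x => if x \in Ioo0 Rb then `|f x|%E else 0%E).

Definition in_Linf {R : realType} (Rb : \bar R) (f : R -> \bar R) : Prop :=
  measurable_fun (Ioo0 Rb) f /\ (Linf_norm Rb f < +oo)%E.

Definition bounded_op {R : realType} (X : (R -> \bar R) -> Prop)
  (N : (R -> \bar R) -> \bar R) (T : (R -> \bar R) -> (R -> \bar R)) : Prop :=
  exists C : R, forall f, X f -> X (T f) /\ (N (T f) <= C%:E * N f)%E.

(* If phi satisfies the B-condition, then phi(s) f^*(s) <= phi(s) f^**(s) <= ||f||_M gives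
   S_phi f(t) <= ||f||_M / phi(t); the bound is non-increasing in t, hence it also bounds
   (S_phi f)^*(t), and averaging it over (0,t) is exactly what the B-condition controls.
   Conversely, test boundedness on the indicator f_a of (0,a), for which ||f_a||_M <= phi(a).
   For s >= a, S_phi f_a >= phi(a) / (4 phi(s)) on an interval (0,y) with s < y <= 2s (each
   factor 2 is a doubling phi(2u) <= 2 phi(u)), so (S_phi f_a)^*(s) >= phi(a) / (4 phi(s)).
   Integrating over [a,t) and using ||S_phi f_a||_M <= C phi(a) bounds the integral of 1/phi
   over [a,t) by 4 C t / phi(t) uniformly in a; let a -> 0 by monotone convergence.
   On L^infty, f^* <= ||f||_infty and phi is non-decreasing, so S_phi f <= ||f||_infty. *)

From HB Require Import structures.
From mathcomp Require Import all_boot all_order all_algebra.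
From mathcomp Require Import all_classical all_reals all_analysis.
From mathcomp Require Import measurable_realfun ess_sup_inf.
From mathcomp Require Import ring lra.
Set Implicit Arguments. Unset Strict Implicit. Unset Printing Implicit Defensive.
Import Order.TTheory GRing.Theory Num.Theory.
Import numFieldNormedType.Exports.
Local Open Scope classical_set_scope.
Local Open Scope ring_scope.

Section monotone_measurable.
Variable R : realType.
Local Open Scope ereal_scope.

Lemma nondecreasing_emeasurable (D : set R) (f : R -> \bar R) : is_interval D ->
  (forall x y, D x -> D y -> (x <= y)%R -> f x <= f y) -> measurable_fun D f.
Proof.
move=> iD f_nd; have mD := is_interval_measurable iD.
apply: (measurability _ (ErealGenOInfty.measurableE R)) => //.
move=> /= _ [_ [r ->] <-]; apply: is_interval_measurable.
move=> s t [Ds rfs] [Dt _] u /andP[su ut].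
have Du : D u by apply: (iD s t) => //; rewrite su ut.
move: rfs; rewrite /= ?in_itv /= ?andbT => rfs; split => //.
by rewrite /= ?in_itv /= ?andbT (lt_le_trans rfs) // f_nd.
Qed.

Lemma nonincreasing_emeasurable (D : set R) (f : R -> \bar R) : is_interval D ->
  (forall x y, D x -> D y -> (x <= y)%R -> f y <= f x) -> measurable_fun D f.
Proof.
move=> iD f_ni; have mD := is_interval_measurable iD.
have mNf : measurable_fun D (fun x => - f x).
  by apply: nondecreasing_emeasurable => // x y Dx Dy xy; rewrite leeN2 f_ni.
rewrite (_ : f = -%E \o (fun x => - f x)); last by apply/funext => x /=; rewrite oppeK.
exact: measurableT_comp (@oppe_measurable R setT) mNf.
Qed.

End monotone_measurable.

Lemma lebesgue_measure_Ioo (R : realType) (a b : R) : a <= b ->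
  (lebesgue_measure : measure _ R) `]a, b[%classic = (b - a)%:E.
Proof.
move=> ab; have := @lebesgue_measure_itv R `]a, b[; rewrite /=.
case: ltP => [_ -> //|]; rewrite lee_fin => ba.
have -> : a = b by apply/eqP; rewrite eq_le ab.
by rewrite subrr => ->.
Qed.

Section truncation.
Variable R : realType.
Local Open Scope ereal_scope.

Lemma le_integral_Ioo0_of_Ico (g : R -> \bar R) (t : R) (K : \bar R) :
  (0 < t)%R -> measurable_fun (`]0%R, t[ : set R) g ->
  (forall x, (`]0%R, t[%classic : set R) x -> 0 <= g x) ->
  (forall a : R, (0 < a < t)%R ->
    \int[lebesgue_measure]_(x in (`[a, t[ : set R)) g x <= K) ->
  \int[lebesgue_measure]_(x in (`]0%R, t[ : set R)) g x <= K.
Proof.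
move=> t0 mg g0 g_le; pose a n := (t / n.+2%:R)%R.
have a_gt0 n : (0 < a n)%R by rewrite divr_gt0.
have a_lt n : (a n < t)%R by rewrite ltr_pdivrMr // ltr_pMr // ltr1n.
have a_ni m n : (m <= n)%N -> (a n <= a m)%R.
  by move=> mn; rewrite ler_wpM2l ?(ltW t0) // lef_pV2 ?posrE // ler_nat !ltnS.
have Ico_sub n : (`[a n, t[ : set R) `<=` `]0%R, t[.
  by move=> x; rewrite /= !in_itv /= => /andP[ax ->]; rewrite (lt_le_trans (a_gt0 n)).
have IooI_Ico n : `]0%R, t[%classic `&` `[a n, t[%classic = `[a n, t[%classic :> set R.
  exact: setIidr (Ico_sub n).
pose gn n := g \_ (`[a n, t[ : set R).
have mgn n : measurable_fun (`]0%R, t[ : set R) (gn n).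
  by apply/measurable_restrict => //; rewrite IooI_Ico; exact: measurable_funS mg.
have gn0 n x : (`]0%R, t[%classic : set R) x -> 0 <= gn n x.
  by move=> xI; rewrite /gn /restrict; case: ifPn => //; rewrite inE => /Ico_sub /g0.
have gn_nd x : (`]0%R, t[%classic : set R) x ->
    {homo gn ^~ x : m n / (m <= n)%N >-> m <= n}.
  move=> _ m n mn; apply: restrict_lee; last first.
    by move=> y; rewrite /= !in_itv /= => /andP[/(le_trans (a_ni _ _ mn)) ->].
  by move=> y /Ico_sub /g0.
have gn_lim x : (`]0%R, t[%classic : set R) x -> limn (gn ^~ x) = g x.
  rewrite /= in_itv /= => /andP[x0 xt]; apply: lim_near_cst => //.
  exists (Num.Def.truncn (t / x)) => // n /= Nn; rewrite /gn patchT // inE /= in_itv /= xt andbT.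
  rewrite /a ler_pdivrMr // mulrC -ler_pdivrMr //; apply/ltW/(lt_le_trans (truncnS_gt _)).
  by rewrite ler_nat ltnS (leq_trans Nn).
have mI : measurable (`]0%R, t[ : set R) by [].
rewrite (@eq_integral _ _ _ lebesgue_measure _ (fun x => limn (gn ^~ x))); last first.
  by move=> x /set_mem /gn_lim.
rewrite (monotone_convergence lebesgue_measure mI mgn gn0 gn_nd); apply: lime_le.
  apply: ereal_nondecreasing_is_cvgn => m n mn.
  apply: ge0_le_integral => //; last by move=> x xI; exact: (gn_nd x xI m n mn).
  - by move=> x xI; exact: gn0.
  - exact: mgn.
  - exact: mgn.
by apply: nearW => n; rewrite -integral_mkcondr IooI_Ico; apply: g_le; rewrite a_gt0 a_lt.
Qed.

End truncation.

Section Ioo0.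
Variables (R : realType) (Rb : \bar R).

Lemma is_interval_Ioo0 : is_interval (Ioo0 Rb).
Proof.
move=> s t [s0 _] [_ tR] u /andP[su ut]; split; first exact: lt_le_trans su.
by apply: le_lt_trans tR; rewrite lee_fin.
Qed.

Lemma measurable_Ioo0 : measurable (Ioo0 Rb).
Proof. exact: is_interval_measurable is_interval_Ioo0. Qed.

Lemma Ioo0_nonempty : (0 < Rb)%E -> exists t, Ioo0 Rb t.
Proof.
case: Rb => [r||] //; rewrite ?lte_fin => r0; last by exists 1; split; [exact: ltr01|exact: ltry].
exists (r / 2); split; first exact: divr_gt0.
by rewrite lte_fin ltr_pdivrMr // ltr_pMr // ltr1n.
Qed.

Lemma Ioo0_sub t : Ioo0 Rb t -> (`]0, t[ : set R) `<=` Ioo0 Rb.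
Proof.
move=> [_ tR] x; rewrite /= in_itv /= => /andP[x0 xt]; split => //.
by apply: le_lt_trans tR; rewrite lee_fin ltW.
Qed.

Lemma Ioo0_le s t : 0 < s -> s <= t -> Ioo0 Rb t -> Ioo0 Rb s.
Proof.
move=> s0 st [_ tR]; split => //.
by apply: le_lt_trans tR; rewrite lee_fin.
Qed.

Lemma Ioo0_next t : Ioo0 Rb t -> exists2 y, t < y <= 2 * t & Ioo0 Rb y.
Proof.
have t_lt2t : 0 < t -> t < 2 * t by move=> t0; rewrite mulr_natl mulr2n ltrDr.
case=> t0; case: Rb => [r||] //; rewrite ?lte_fin => tr; last first.
  by exists (2 * t); [rewrite t_lt2t // lexx|split; [rewrite mulr_gt0|exact: ltry]].
have tr2 : t < (t + r) / 2 by rewrite ltr_pdivlMr // mulrDr mulr1 ltrD2l.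
exists (Num.min (2 * t) ((t + r) / 2)).
  by rewrite lt_min t_lt2t // tr2 ge_min lexx.
split; first by rewrite lt_min (lt_trans t0 (t_lt2t t0)) (lt_trans t0 tr2).
by rewrite lte_fin gt_min ltr_pdivrMr // mulrDr mulr1 ltrD2r tr orbT.
Qed.

End Ioo0.

Section quasiconcave.
Variables (R : realType) (Rb : \bar R) (phi : R -> R).
Hypothesis qc : quasiconcave Rb phi.

Lemma phi_gt0 t : Ioo0 Rb t -> 0 < phi t.
Proof.
case: qc => phi_ge0 phi_eq0 _ _ [t0 tR]; rewrite lt_def phi_ge0 ?ltW // andbT.
by apply/eqP => /(phi_eq0 _ (ltW t0) tR) t_eq0; rewrite t_eq0 ltxx in t0.
Qed.

Lemma le_phi s t : 0 <= s -> s <= t -> Ioo0 Rb t -> phi s <= phi t.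
Proof. by case: qc => _ _ phi_nd _ s0 st [_ tR]; exact: phi_nd. Qed.

Lemma phi_le_ratio s t : 0 < s -> s <= t -> Ioo0 Rb t -> phi t <= t / s * phi s.
Proof.
case: qc => _ _ _ phi_div_ni s0 st [t0 tR].
have := phi_div_ni s t s0 st tR; rewrite ler_pdivrMr // => h.
by rewrite mulrC mulrA; move: h; rewrite mulrAC.
Qed.

Lemma phi_le_double s y : 0 < s -> s <= y <= 2 * s -> Ioo0 Rb y ->
  phi y <= 2 * phi s.
Proof.
move=> s0 /andP[sy y2s] Dy; apply: le_trans (phi_le_ratio s0 sy Dy) _.
rewrite ler_wpM2r ?ler_pdivrMr //.
exact/ltW/phi_gt0/(Ioo0_le s0 sy Dy).
Qed.

Lemma phi_mul_le a s m : Ioo0 Rb a -> Ioo0 Rb s -> 0 <= m -> m <= a -> m <= s ->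
  phi s * m <= s * phi a.
Proof.
move=> Da Ds m0 ma ms; have [[a0 _] [s0 _]] := (Da, Ds).
have ps := phi_gt0 Ds; have [sa|a_lt_s] := leP s a.
  apply: (@le_trans _ _ (phi s * s)); first by rewrite ler_wpM2l ?(ltW ps).
  by rewrite mulrC ler_wpM2l ?(ltW s0) // le_phi ?(ltW s0).
apply: (@le_trans _ _ (phi s * a)); first by rewrite ler_wpM2l ?(ltW ps).
by rewrite -ler_pdivlMr // mulrAC; exact: phi_le_ratio a0 (ltW a_lt_s) Ds.
Qed.

Lemma phiV_nonincreasing x y : Ioo0 Rb x -> Ioo0 Rb y -> x <= y ->
  (((phi y)^-1)%:E <= ((phi x)^-1)%:E)%E.
Proof.
move=> Dx Dy xy; have [x0 _] := Dx.
by rewrite lee_fin lef_pV2 ?posrE ?phi_gt0 // le_phi // ltW.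
Qed.

Lemma measurable_phiV t : Ioo0 Rb t ->
  measurable_fun (`]0, t[ : set R) (fun s => ((phi s)^-1)%:E).
Proof.
move=> Dt; apply: nonincreasing_emeasurable; first exact: interval_is_interval.
by move=> x y /(Ioo0_sub Dt) Dx /(Ioo0_sub Dt) Dy; exact: phiV_nonincreasing.
Qed.

End quasiconcave.

Section rearrangement.
Variables (R : realType) (Rb : \bar R).
Local Open Scope ereal_scope.

Lemma rearr_ge0 f t : 0 <= rearr Rb f t.
Proof. by apply/ereal_infP => _ [lam [lam0 _] <-]; rewrite lee_fin ltW. Qed.

Lemma rearr_le f t (lam : R) : (0 < lam)%R -> distrib Rb f lam <= t%:E ->
  rearr Rb f t <= lam%:E.
Proof. by move=> lam0 dlam; apply: ereal_inf_lbound; exists lam. Qed.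

Lemma rearr_ge f t (c : \bar R) :
  (forall lam : R, (0 < lam)%R -> distrib Rb f lam <= t%:E -> c <= lam%:E) ->
  c <= rearr Rb f t.
Proof. by move=> c_le; apply/ereal_infP => _ [lam [lam0 dlam] <-]; exact: c_le. Qed.

Lemma rearr_nonincreasing f s t : (s <= t)%R -> rearr Rb f t <= rearr Rb f s.
Proof.
move=> st; apply: ereal_inf_le_tmp => _ [lam [lam0 dlam] <-]; exists lam => //.
by split => //; apply: le_trans dlam _; rewrite lee_fin.
Qed.

Lemma measurable_rearr f (D : set R) : is_interval D -> measurable_fun D (rearr Rb f).
Proof.
by move=> iD; apply: nonincreasing_emeasurable => // x y _ _; exact: rearr_nonincreasing.
Qed.

Lemma measurable_distrib_set f (lam : R) : measurable_fun (Ioo0 Rb) f ->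
  measurable (Ioo0 Rb `&` [set x | lam%:E < `|f x|]).
Proof.
move=> mf; have mabsf : measurable_fun (Ioo0 Rb) (abse \o f).
  by apply: measurableT_comp; [exact: abse_measurable|exact: mf].
exact: (emeasurable_fun_o_infty (measurable_Ioo0 Rb) mabsf lam%:E).
Qed.

Lemma rearr_le_bound f t (c : R) : (0 <= t)%R -> (0 <= c)%R ->
  measurable_fun (Ioo0 Rb) f ->
  (forall x, Ioo0 Rb x -> (t <= x)%R -> `|f x| <= c%:E) -> rearr Rb f t <= c%:E.
Proof.
move=> t0 c0 mf f_le; apply/lee_addgt0Pr => e e0; rewrite -EFinD.
apply: rearr_le; first exact: ltr_wpDl.
have <- : lebesgue_measure (`]0%R, t[ : set R) = t%:E.
  by rewrite lebesgue_measure_Ioo // subr0.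
apply: le_measure; rewrite ?inE //; first exact: measurable_distrib_set.
move=> x [Dx ce_lt]; have [x0 _] := Dx; rewrite /= in_itv /= x0 /=.
rewrite ltNge; apply/negP => /(f_le _ Dx) fc.
by move: (lt_le_trans ce_lt fc); rewrite lte_fin ltNge lerDl ltW.
Qed.

Lemma rearr_ge_bound f t y (c : \bar R) : (0 <= t)%R -> (t < y)%R ->
  (`]0%R, y[ : set R) `<=` Ioo0 Rb -> measurable_fun (Ioo0 Rb) f ->
  (forall x, (0 < x < y)%R -> c <= `|f x|) -> c <= rearr Rb f t.
Proof.
move=> t0 ty y_sub mf c_le; apply: rearr_ge => lam lam0 dlam.
rewrite leNgt; apply/negP => lam_lt_c.
have : y%:E <= distrib Rb f lam.
  have <- : lebesgue_measure (`]0%R, y[ : set R) = y%:E.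
    by rewrite lebesgue_measure_Ioo ?subr0 // ltW // (le_lt_trans t0).
  apply: le_measure; rewrite ?inE //; first exact: measurable_distrib_set.
  move=> x xy; split; first exact: y_sub.
  by apply: lt_le_trans lam_lt_c _; apply: c_le; move: xy; rewrite /= in_itv.
by move=> /le_trans /(_ dlam); rewrite lee_fin leNgt ty.
Qed.

Lemma rearr2_ge0 f t : (0 < t)%R -> 0 <= rearr2 Rb f t.
Proof.
move=> t0; apply: mule_ge0; first by rewrite lee_fin invr_ge0 ltW.
by apply: integral_ge0 => x _; exact: rearr_ge0.
Qed.

Lemma rearr_le_rearr2 f t : (0 < t)%R -> rearr Rb f t <= rearr2 Rb f t.
Proof.
move=> t0; have : \int[lebesgue_measure]_(s in (`]0%R, t[ : set R)) cst (rearr Rb f t) s <=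
    \int[lebesgue_measure]_(s in (`]0%R, t[ : set R)) rearr Rb f s.
  apply: ge0_le_integral => //.
  - by move=> x _; exact: rearr_ge0.
  - by apply: measurable_rearr; exact: interval_is_interval.
  - by move=> x; rewrite /= in_itv /= => /andP[_ /ltW]; exact: rearr_nonincreasing.
rewrite integral_cst // (lebesgue_measure_Ioo (ltW t0)) subr0 => int_ge.
apply: le_trans (lee_wpmul2l _ int_ge); last by rewrite lee_fin invr_ge0 ltW.
by rewrite muleCA -EFinM mulVf ?gt_eqF // mule1.
Qed.

End rearrangement.

Section S_op.
Variables (R : realType) (Rb : \bar R) (phi : R -> R).
Hypothesis qc : quasiconcave Rb phi.
Local Open Scope ereal_scope.

Lemma M_norm_ge0 f : (0 < Rb)%E -> 0 <= M_norm Rb phi f.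
Proof.
move=> /Ioo0_nonempty[t Dt]; apply: le_ereal_sup_tmp.
exists ((phi t)%:E * rearr2 Rb f t); first by exists t.
by rewrite mule_ge0 ?rearr2_ge0 // ?lee_fin ?(ltW (phi_gt0 qc Dt)) //; case: Dt.
Qed.

Lemma phi_rearr_le_M_norm f s : Ioo0 Rb s ->
  (phi s)%:E * rearr Rb f s <= M_norm Rb phi f.
Proof.
move=> Ds; apply: (@le_trans _ _ ((phi s)%:E * rearr2 Rb f s)).
  by rewrite lee_wpmul2l ?lee_fin ?(ltW (phi_gt0 qc Ds)) // rearr_le_rearr2 //; case: Ds.
by apply: ereal_sup_ubound; exists s.
Qed.

Lemma S_op_ge0 f t : Ioo0 Rb t -> 0 <= S_op Rb phi f t.
Proof.
move=> Dt; have [t0 _] := Dt; have t2 : (0 < t / 2 < t)%R.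
  by rewrite divr_gt0 //= ltr_pdivrMr // ltr_pMr // ltr1n.
apply: mule_ge0; first by rewrite lee_fin invr_ge0 ltW // (phi_gt0 qc Dt).
apply: le_ereal_sup_tmp; exists ((phi (t / 2))%:E * rearr Rb f (t / 2)).
  by exists (t / 2)%R; rewrite //= in_itv.
rewrite mule_ge0 ?rearr_ge0 // lee_fin ltW // (phi_gt0 qc) //.
by apply: (Ioo0_sub Dt); rewrite /= in_itv.
Qed.

Lemma measurable_S_op f : measurable_fun (Ioo0 Rb) (S_op Rb phi f).
Proof.
apply: (@emeasurable_funM _ _ _ _ (fun t => ((phi t)^-1)%:E)
  (fun t => ereal_sup [set (phi s)%:E * rearr Rb f s | s in (`]0%R, t[ : set R)])).
  apply: nonincreasing_emeasurable; first exact: is_interval_Ioo0.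
  by move=> x y; exact: (@phiV_nonincreasing R Rb phi qc x y).
apply: nondecreasing_emeasurable; first exact: is_interval_Ioo0.
move=> x y _ _ xy; apply: ereal_sup_le => _ [s + <-]; rewrite /= in_itv /= => /andP[s0 sx].
by exists s => //; rewrite /= in_itv /= s0 (lt_le_trans sx).
Qed.

Lemma S_op_le_M_norm f t : Ioo0 Rb t ->
  S_op Rb phi f t <= ((phi t)^-1)%:E * M_norm Rb phi f.
Proof.
move=> Dt; apply: lee_wpmul2l; first by rewrite lee_fin invr_ge0 ltW // (phi_gt0 qc Dt).
apply: ge_ereal_sup => _ [s /(Ioo0_sub Dt) Ds <-]; exact: phi_rearr_le_M_norm.
Qed.

End S_op.

Section B_condition_sufficient.
Variables (R : realType) (Rb : \bar R) (phi : R -> R).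
Hypotheses (Rb0 : (0 < Rb)%E) (qc : quasiconcave Rb phi).
Local Open Scope ereal_scope.

Lemma rearr_S_op_le f N t : M_norm Rb phi f = N%:E -> Ioo0 Rb t ->
  rearr Rb (S_op Rb phi f) t <= (N / phi t)%:E.
Proof.
move=> MN Dt; have [t0 _] := Dt; have pt := phi_gt0 qc Dt.
have N0 : (0 <= N)%R by rewrite -lee_fin -MN M_norm_ge0.
apply: rearr_le_bound; [exact: ltW|exact: divr_ge0 N0 (ltW pt)|exact: (measurable_S_op qc f)|].
move=> x Dx tx; rewrite gee0_abs ?S_op_ge0 //.
apply: (le_trans (S_op_le_M_norm qc f Dx)); rewrite MN -EFinM lee_fin mulrC.
rewrite ler_wpM2l // lef_pV2 ?posrE ?(phi_gt0 qc Dx) //.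
exact: (le_phi qc (ltW t0) tx Dx).
Qed.

Lemma rearr2_S_op_le f N C t : M_norm Rb phi f = N%:E -> Ioo0 Rb t ->
  (t^-1)%:E * \int[lebesgue_measure]_(s in (`]0%R, t[ : set R)) ((phi s)^-1)%:E
    <= (C / phi t)%:E ->
  rearr2 Rb (S_op Rb phi f) t <= (N * (C / phi t))%:E.
Proof.
move=> MN Dt B_t; have [t0 _] := Dt.
have N0 : (0 <= N)%R by rewrite -lee_fin -MN M_norm_ge0.
have phiV_ge0 x : (`]0%R, t[%classic : set R) x -> 0 <= ((phi x)^-1)%:E.
  by move=> /(Ioo0_sub Dt) Dx; rewrite lee_fin invr_ge0 ltW // (phi_gt0 qc Dx).
have int_le : \int[lebesgue_measure]_(s in (`]0%R, t[ : set R)) rearr Rb (S_op Rb phi f) s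
    <= N%:E * \int[lebesgue_measure]_(s in (`]0%R, t[ : set R)) ((phi s)^-1)%:E.
  rewrite -ge0_integralZl_EFin //; last exact: (measurable_phiV qc Dt).
  apply: ge0_le_integral => //.
  - by move=> x _; exact: rearr_ge0.
  - by apply: measurable_rearr; exact: interval_is_interval.
  - by apply: emeasurable_funM; [exact: measurable_cst|exact: (measurable_phiV qc Dt)].
  - by move=> x /(Ioo0_sub Dt) Dx; rewrite -EFinM; exact: rearr_S_op_le.
apply: le_trans (lee_wpmul2l _ int_le) _; first by rewrite lee_fin invr_ge0 ltW.
by rewrite muleCA EFinM lee_wpmul2l // lee_fin.
Qed.

Lemma B_condition_bounded_op : B_condition Rb phi ->
  bounded_op (in_M Rb phi) (M_norm Rb phi) (S_op Rb phi).
Proof.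
case=> C [C0 B_C]; exists C => f [mf _ Mf_fin].
have Mf0 := M_norm_ge0 qc f Rb0.
have MN : M_norm Rb phi f = (fine (M_norm Rb phi f))%:E by rewrite fineK // ge0_fin_numE.
set N := fine _ in MN.
have MSf_le : M_norm Rb phi (S_op Rb phi f) <= (C * N)%:E.
  apply: ge_ereal_sup => _ [t Dt <-]; have pt := phi_gt0 qc Dt.
  apply: le_trans (lee_wpmul2l _ (rearr2_S_op_le MN Dt (B_C t Dt))) _.
    by rewrite lee_fin ltW.
  rewrite -EFinM lee_fin; have -> : (phi t * (N * (C / phi t)) = C * N)%R.
    by field; rewrite gt_eqF.
  exact: lexx.
split; last by rewrite MN -EFinM.
split; [exact: (measurable_S_op qc)| |exact: le_lt_trans MSf_le (ltry _)].
apply: aeW => x Dx; rewrite ge0_fin_numE ?S_op_ge0 //.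
by apply: le_lt_trans (S_op_le_M_norm qc f Dx) _; rewrite MN -EFinM ltry.
Qed.

End B_condition_sufficient.

Section Linfty.
Variables (R : realType) (Rb : \bar R).
Local Open Scope ereal_scope.

Lemma Linf_norm_ge0 f : 0 <= Linf_norm Rb f.
Proof.
apply: ess_sup_gee; last by apply: aeW => x; case: ifP => _ //; exact: abse_ge0.
apply: (@lt_le_trans _ _ ((lebesgue_measure : measure _ R) `]0%R, 1%R[%classic)).
  by rewrite lebesgue_measure_Ioo // subr0 lte01.
by apply: le_measure; rewrite ?inE.
Qed.

Lemma distrib_gt_Linf_norm f (lam : R) : measurable_fun (Ioo0 Rb) f ->
  Linf_norm Rb f < lam%:E -> distrib Rb f lam = 0.
Proof.
move=> mf Lf_lt; have [A [mA A0 sub]] := ess_sup_ge lebesgue_measure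
  (fun x => if x \in Ioo0 Rb then `|f x| else 0).
apply/eqP; rewrite eq_le measure_ge0 andbT -A0.
apply: le_measure; rewrite ?inE //; first exact: measurable_distrib_set.
move=> x [Dx lam_lt]; apply: sub => /=; rewrite (mem_set Dx) => abs_le.
by move: (lt_le_trans lam_lt abs_le); rewrite ltNge (ltW Lf_lt).
Qed.

Lemma rearr_le_Linf_norm f t : (0 <= t)%R -> measurable_fun (Ioo0 Rb) f ->
  Linf_norm Rb f < +oo -> rearr Rb f t <= Linf_norm Rb f.
Proof.
move=> t0 mf Lf_fin; have Lf0 := Linf_norm_ge0 f.
have LE : Linf_norm Rb f = (fine (Linf_norm Rb f))%:E by rewrite fineK // ge0_fin_numE.
set L := fine _ in LE; rewrite LE.
apply/lee_addgt0Pr => e e0; rewrite -EFinD; apply: rearr_le.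
  by rewrite ltr_wpDl // -lee_fin -LE.
by rewrite distrib_gt_Linf_norm ?lee_fin // LE lte_fin ltrDl.
Qed.

Lemma S_op_le_Linf_norm (phi : R -> R) f t : quasiconcave Rb phi ->
  measurable_fun (Ioo0 Rb) f -> Linf_norm Rb f < +oo -> Ioo0 Rb t ->
  S_op Rb phi f t <= Linf_norm Rb f.
Proof.
move=> qc mf Lf_fin Dt; have pt := phi_gt0 qc Dt.
apply: (@le_trans _ _ (((phi t)^-1)%:E * ((phi t)%:E * Linf_norm Rb f))).
  apply: lee_wpmul2l; first by rewrite lee_fin invr_ge0 ltW.
  apply: ge_ereal_sup => _ [s sI <-]; have [s0 st] := andP sI.
  apply: le_trans (lee_wpmul2l _ (rearr_le_Linf_norm (ltW s0) mf Lf_fin)) _.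
    by rewrite lee_fin ltW // (phi_gt0 qc (Ioo0_sub Dt sI)).
  by rewrite lee_wpmul2r ?Linf_norm_ge0 // lee_fin (le_phi qc) ?ltW.
by rewrite muleA -EFinM mulVf ?gt_eqF // mul1e.
Qed.

Lemma Linf_bounded_op (phi : R -> R) : quasiconcave Rb phi ->
  bounded_op (in_Linf Rb) (Linf_norm Rb) (S_op Rb phi).
Proof.
move=> qc; exists 1%R => f [mf Lf_fin].
have LSf_le : Linf_norm Rb (S_op Rb phi f) <= Linf_norm Rb f.
  apply/ess_supP; apply: aeW => x; case: ifP => [/set_mem Dx|_]; last exact: Linf_norm_ge0.
  by rewrite gee0_abs ?(S_op_ge0 qc) //; exact: S_op_le_Linf_norm.
rewrite mul1e; split => //; split; first exact: (measurable_S_op qc).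
exact: le_lt_trans LSf_le Lf_fin.
Qed.

End Linfty.

Definition indic_Ioo0 (R : realType) (a : R) (x : R) : \bar R :=
  (\1_(`]0%R, a[%classic : set R) x)%:E.

Section indicator.
Variables (R : realType) (Rb : \bar R) (phi : R -> R).
Hypothesis qc : quasiconcave Rb phi.
Local Open Scope ereal_scope.

Lemma indic_Ioo0E (a x : R) : indic_Ioo0 a x = (if (0 < x < a)%R then 1 else 0)%:E.
Proof.
rewrite /indic_Ioo0 indicE; congr (_%:E); case: ifPn => x_in.
  by rewrite mem_set //= in_itv /= x_in.
by rewrite memNset //= in_itv /= (negbTE x_in).
Qed.

Lemma measurable_indic_Ioo0 (a : R) (D : set R) : measurable_fun D (indic_Ioo0 a).
Proof. by apply/measurable_EFinP; exact: measurable_indic. Qed.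

Lemma rearr_indic_Ioo0_le (a x : R) : (0 < x)%R -> rearr Rb (indic_Ioo0 a) x <= indic_Ioo0 a x.
Proof.
move=> x0; rewrite [leRHS]indic_Ioo0E x0 /=.
apply: rearr_le_bound.
- exact: ltW.
- by case: ltP.
- exact: measurable_indic_Ioo0.
move=> y _ xy; rewrite indic_Ioo0E; case: ifPn => [/andP[_ ya]|_].
  by rewrite (le_lt_trans xy ya) gee0_abs // lee_fin ler01.
by rewrite abse0; case: ltP => _; rewrite lee_fin ?ler01.
Qed.

Lemma rearr_indic_Ioo0_ge (a s : R) : Ioo0 Rb a -> (0 <= s < a)%R ->
  1 <= rearr Rb (indic_Ioo0 a) s.
Proof.
move=> Da /andP[s0 sa]; apply: (rearr_ge_bound s0 sa (Ioo0_sub Da)).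
  exact: measurable_indic_Ioo0.
by move=> x x_in; rewrite indic_Ioo0E x_in gee0_abs // lee_fin ler01.
Qed.

Lemma M_norm_indic_Ioo0_le (a : R) : Ioo0 Rb a -> M_norm Rb phi (indic_Ioo0 a) <= (phi a)%:E.
Proof.
move=> Da; apply: ge_ereal_sup => _ [s Ds <-]; have [s0 _] := Ds.
have mIoo (b : R) : measurable (`]0%R, b[ : set R) by [].
have int_le : \int[lebesgue_measure]_(x in (`]0%R, s[ : set R)) rearr Rb (indic_Ioo0 a) x
    <= lebesgue_measure (`]0%R, a[ `&` `]0%R, s[ : set R).
  rewrite -integral_indic //; apply: ge0_le_integral => //.
  - by move=> x _; exact: rearr_ge0.
  - by apply: measurable_rearr; exact: interval_is_interval.
  - exact: measurable_indic_Ioo0.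
  - by move=> x; rewrite /= in_itv /= => /andP[x0 _]; exact: rearr_indic_Ioo0_le.
set m := lebesgue_measure _ in int_le.
have [a0 _] := Da.
have m_le_a : m <= a%:E.
  have := lebesgue_measure_Ioo (ltW a0); rewrite subr0 => <-.
  by apply: le_measure; rewrite ?inE //; exact: measurableI.
have m_le_s : m <= s%:E.
  have := lebesgue_measure_Ioo (ltW s0); rewrite subr0 => <-.
  by apply: le_measure; rewrite ?inE //; exact: measurableI.
have m_ge0 : 0 <= m by exact: measure_ge0.
have mE : m = (fine m)%:E by rewrite fineK // ge0_fin_numE // (le_lt_trans m_le_a) ?ltry.
rewrite mE lee_fin in m_le_a m_le_s m_ge0; rewrite mE in int_le.
apply: (@le_trans _ _ ((phi s)%:E * ((s^-1)%:E * (fine m)%:E))).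
  rewrite lee_wpmul2l ?lee_fin ?(ltW (phi_gt0 qc Ds)) //.
  by rewrite lee_wpmul2l // lee_fin invr_ge0 ltW.
rewrite -!EFinM lee_fin mulrCA ler_pdivrMl //.
exact: (phi_mul_le qc Da Ds m_ge0 m_le_a m_le_s).
Qed.

Lemma in_M_indic_Ioo0 (a : R) : Ioo0 Rb a -> in_M Rb phi (indic_Ioo0 a).
Proof.
move=> Da; split; first exact: measurable_indic_Ioo0.
  by apply: aeW => x _; rewrite indic_Ioo0E.
by apply: le_lt_trans (M_norm_indic_Ioo0_le Da) _; exact: ltry.
Qed.

Lemma S_op_indic_Ioo0_ge_ratio a x s : Ioo0 Rb a -> Ioo0 Rb x -> (0 < s < x)%R -> (s < a)%R ->
  (phi s / phi x)%:E <= S_op Rb phi (indic_Ioo0 a) x.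
Proof.
move=> Da Dx s_in sa; have /andP[s0 sx] := s_in.
have ps := phi_gt0 qc (Ioo0_sub Dx s_in); have px := phi_gt0 qc Dx.
rewrite /S_op mulrC EFinM lee_wpmul2l ?lee_fin ?invr_ge0 ?(ltW px) //.
apply: le_ereal_sup_tmp; exists ((phi s)%:E * rearr Rb (indic_Ioo0 a) s); first by exists s.
rewrite -[leLHS]mule1 lee_wpmul2l ?lee_fin ?(ltW ps) //.
by apply: rearr_indic_Ioo0_ge; rewrite ?(ltW s0).
Qed.

Lemma S_op_indic_Ioo0_ge a s y x : Ioo0 Rb a -> Ioo0 Rb s -> (a <= s)%R ->
  (s <= y <= 2 * s)%R -> Ioo0 Rb y -> (0 < x < y)%R ->
  (phi a / (4 * phi s))%:E <= S_op Rb phi (indic_Ioo0 a) x.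
Proof.
move=> Da Ds a_le_s y_in Dy x_in; have /andP[x0 xy] := x_in.
have [a0 _] := Da; have [s0 _] := Ds; have Dx := Ioo0_sub Dy x_in.
have [[pa ps] px] := (phi_gt0 qc Da, phi_gt0 qc Ds, phi_gt0 qc Dx).
have pas : (phi a <= phi s)%R by exact: (le_phi qc (ltW a0) a_le_s Ds).
have pxs : (phi x <= 2 * phi s)%R.
  exact: le_trans (le_phi qc (ltW x0) (ltW xy) Dy) (phi_le_double qc s0 y_in Dy).
suff [r r_in [ra pr]] : exists2 r, (0 < r < x)%R & (r < a)%R /\
    (phi a * phi x <= phi r * (4 * phi s))%R.
  apply: le_trans (S_op_indic_Ioo0_ge_ratio Da Dx r_in ra).
  by rewrite lee_fin ler_pdivrMr ?mulr_gt0 // mulrAC ler_pdivlMr.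
have half_in (b : R) : (0 < b)%R -> (0 < b / 2 < b)%R.
  by move=> b0; rewrite divr_gt0 //= ltr_pdivrMr // ltr_pMr // ltr1n.
have dbl (b : R) : Ioo0 Rb b -> (0 < phi (b / 2) /\ phi b <= 2 * phi (b / 2))%R.
  move=> Db; have [b0 _] := Db; have /andP[b20 b2b] := half_in b b0.
  split; first exact: (phi_gt0 qc (Ioo0_le b20 (ltW b2b) Db)).
  by apply: (phi_le_double qc b20 _ Db); rewrite ltW //= mulrC divfK.
have [xa|ax] := leP x a.
  have /andP[x20 x2x] := half_in x x0; have [px2 px_le] := dbl x Dx.
  exists (x / 2)%R; rewrite ?x20 //; split; first exact: lt_le_trans x2x xa.
  nra.
have /andP[a20 a2a] := half_in a a0; have [pa2 pa_le] := dbl a Da.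
exists (a / 2)%R; rewrite ?a20 ?(lt_trans a2a ax) //; split => //.
nra.
Qed.

Lemma rearr_S_op_indic_Ioo0_ge a s : Ioo0 Rb a -> Ioo0 Rb s -> (a <= s)%R ->
  (phi a / (4 * phi s))%:E <= rearr Rb (S_op Rb phi (indic_Ioo0 a)) s.
Proof.
move=> Da Ds a_le_s; have [s0 _] := Ds; have [y /andP[sy y2s] Dy] := Ioo0_next Ds.
apply: (rearr_ge_bound (ltW s0) sy (Ioo0_sub Dy) (measurable_S_op qc _)) => x x_in.
rewrite gee0_abs ?(S_op_ge0 qc _ (Ioo0_sub Dy x_in)) //.
by apply: (S_op_indic_Ioo0_ge Da Ds a_le_s _ Dy x_in); rewrite ltW.
Qed.

End indicator.

Section B_condition_necessary.
Variables (R : realType) (Rb : \bar R) (phi : R -> R).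
Hypotheses (Rb0 : (0 < Rb)%E) (qc : quasiconcave Rb phi).
Variable C0 : R.
Hypothesis S_bounded : forall f, in_M Rb phi f ->
  in_M Rb phi (S_op Rb phi f) /\ (M_norm Rb phi (S_op Rb phi f) <= C0%:E * M_norm Rb phi f)%E.
Local Open Scope ereal_scope.

Lemma integral_phiV_Ico_le a t : Ioo0 Rb t -> (0 < a < t)%R ->
  \int[lebesgue_measure]_(s in (`[a, t[ : set R)) ((phi s)^-1)%:E
    <= (4 * `|C0| * t / phi t)%:E.
Proof.
move=> Dt a_in; have [t0 _] := Dt; have Da := Ioo0_sub Dt a_in.
have [pa pt] := (phi_gt0 qc Da, phi_gt0 qc Dt); have /andP[a0 at_] := a_in.
have Ico_sub : (`[a, t[ : set R) `<=` `]0%R, t[.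
  by move=> x; rewrite /= !in_itv /= => /andP[ax ->]; rewrite (lt_le_trans a0).
have MSf_le : M_norm Rb phi (S_op Rb phi (indic_Ioo0 a)) <= (`|C0| * phi a)%:E.
  apply: le_trans (proj2 (S_bounded (in_M_indic_Ioo0 qc Da))) _; rewrite EFinM.
  apply: le_trans (lee_wpmul2r _ _) (lee_wpmul2l _ (M_norm_indic_Ioo0_le qc Da)).
  - exact: M_norm_ge0.
  - by rewrite lee_fin ler_norm.
  - by rewrite lee_fin normr_ge0.
have int_le : (phi a / 4)%:E * \int[lebesgue_measure]_(s in (`[a, t[ : set R)) ((phi s)^-1)%:E
    <= \int[lebesgue_measure]_(s in (`]0%R, t[ : set R)) rearr Rb (S_op Rb phi (indic_Ioo0 a)) s.
  have mphiV := measurable_funS (measurable_itv _) Ico_sub (measurable_phiV qc Dt).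
  have mrearr : measurable_fun (`]0%R, t[ : set R) (rearr Rb (S_op Rb phi (indic_Ioo0 a))).
    by apply: measurable_rearr; exact: interval_is_interval.
  rewrite -ge0_integralZl_EFin //; last 2 first.
  - by move=> x /Ico_sub /(Ioo0_sub Dt) Dx; rewrite lee_fin invr_ge0 ltW // (phi_gt0 qc Dx).
  - by rewrite divr_ge0 // ltW.
  apply: (@le_trans _ _
    (\int[lebesgue_measure]_(s in (`[a, t[ : set R)) rearr Rb (S_op Rb phi (indic_Ioo0 a)) s)).
    apply: ge0_le_integral => //.
    - move=> x /Ico_sub /(Ioo0_sub Dt) Dx.
      by rewrite mule_ge0 ?lee_fin ?divr_ge0 ?invr_ge0 ?ltW // (phi_gt0 qc Dx).
    - by apply: emeasurable_funM => //; exact: measurable_cst.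
    - exact: measurable_funS (measurable_itv _) Ico_sub mrearr.
    move=> x x_in; have Dx := Ioo0_sub Dt (Ico_sub x x_in).
    move: x_in; rewrite /= in_itv /= => /andP[ax _].
    apply: le_trans (rearr_S_op_indic_Ioo0_ge qc Da Dx ax); rewrite -EFinM lee_fin.
    by rewrite invfM mulrA.
  apply: ge0_subset_integral => //; first by move=> x _; exact: rearr_ge0.
have rearr2_le : (phi t)%:E * rearr2 Rb (S_op Rb phi (indic_Ioo0 a)) t
    <= (`|C0| * phi a)%:E.
  by apply: le_trans MSf_le; apply: ereal_sup_ubound; exists t.
set r := (phi t / t * (phi a / 4))%R.
have r0 : (0 < r)%R by rewrite /r !mulr_gt0 ?invr_gt0.
have -> : (4 * `|C0| * t / phi t = r^-1 * (`|C0| * phi a))%R.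
  by rewrite /r; field; rewrite !gt_eqF.
rewrite EFinM lee_pdivlMl //; apply: le_trans rearr2_le; rewrite /rearr2.
apply: le_trans (lee_wpmul2l _ (lee_wpmul2l _ int_le)); last 2 first.
- by rewrite lee_fin ltW.
- by rewrite lee_fin invr_ge0 ltW.
by rewrite /r !EFinM !muleA.
Qed.

Lemma B_condition_of_S_bounded : B_condition Rb phi.
Proof.
exists (4 * `|C0| + 1)%R; split; first by rewrite ltr_wpDl // mulr_ge0.
move=> t Dt; have [t0 _] := Dt; have pt := phi_gt0 qc Dt.
have int_le : \int[lebesgue_measure]_(s in (`]0%R, t[ : set R)) ((phi s)^-1)%:E
    <= (4 * `|C0| * t / phi t)%:E.
  apply: le_integral_Ioo0_of_Ico => //; first exact: (measurable_phiV qc Dt).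
    by move=> x /(Ioo0_sub Dt) Dx; rewrite lee_fin invr_ge0 ltW // (phi_gt0 qc Dx).
  by move=> a a_in; exact: (integral_phiV_Ico_le Dt a_in).
apply: le_trans (lee_wpmul2l _ int_le) _; first by rewrite lee_fin invr_ge0 ltW.
rewrite -EFinM; have -> : (t^-1 * (4 * `|C0| * t / phi t) = 4 * `|C0| / phi t)%R.
  by field; rewrite !gt_eqF.
by rewrite lee_fin ler_wpM2r ?invr_ge0 ?(ltW pt) // lerDl.
Qed.

End B_condition_necessary.

Theorem lemma3p2 (R : realType) (Rb : \bar R) (phi : R -> R) :
  (0 < Rb)%E -> quasiconcave Rb phi ->
  (bounded_op (in_M Rb phi) (M_norm Rb phi) (S_op Rb phi) <-> B_condition Rb phi)
  /\ bounded_op (in_Linf Rb) (Linf_norm Rb) (S_op Rb phi).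
Proof.
move=> Rb0 qc; split; last exact: Linf_bounded_op qc.
split; first by case=> C0; exact: B_condition_of_S_bounded.
exact: B_condition_bounded_op.
Qed.
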